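(* Let $\mathcal{H}$ be a real Hilbert space, $A:\mathcal{H}\rightrightarrows\mathcal{H}$ maximal monotone with $A^{-1}(0)\neq\emptyset$, $\theta>0$, $p\geq1$ an integer, and let $(x,\lambda):[0,+\infty)\to\mathcal{H}\times(0,+\infty)$ be a global solution of \[ \dot{x}(t)+x(t)-(I+\lambda(t)A)^{-1}x(t)=0,\qquad \lambda(t)\,\|(I+\lambda(t)A)^{-1}x(t)-x(t)\|^{p-1}=\theta, \] with $x(0)\in\{x:0\notin Ax\}$. Fix $z\in A^{-1}(0)$ and let $\mathcal{E}(t)=\frac12\|x(t)-z\|^2$. Then \[ \frac{d\mathcal{E}(t)}{dt}\leq-\|x(t)-(I+\lambda(t)A)^{-1}x(t)\|^2 . \]
   Context: $(I+\lambda A)^{-1}$ is the resolvent of $A$ of index $\lambda>0$; $A^{-1}(0)=\{x:0\in Ax\}$. *)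

From HB Require Import structures.
From mathcomp Require Import all_boot all_order all_algebra.
From mathcomp Require Import all_classical all_reals all_analysis.
Set Implicit Arguments. Unset Strict Implicit. Unset Printing Implicit Defensive.
Import Order.TTheory GRing.Theory Num.Theory.
Import numFieldNormedType.Exports.
Local Open Scope classical_set_scope.
Local Open Scope ring_scope.

Definition is_inner_product (R : realType) (V : completeNormedModType R)
  (ip : V -> V -> R) : Prop :=
  [/\ forall x y, ip x y = ip y x,
      forall a x y z, ip (a *: x + y) z = a * ip x z + ip y z
    & forall x, ip x x = `|x| ^+ 2].

(* Set-valued operators A : V ⇉ V are represented by their values A x : set V. *)
Definition monotone_op (R : realType) (V : completeNormedModType R)
  (ip : V -> V -> R) (A : V -> set V) : Prop :=
  forall x y u v, A x u -> A y v -> 0 <= ip (x - y) (u - v).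

Definition maximal_monotone (R : realType) (V : completeNormedModType R)
  (ip : V -> V -> R) (A : V -> set V) : Prop :=
  monotone_op ip A /\
  forall B : V -> set V, monotone_op ip B -> (forall x, A x `<=` B x) -> B = A.

Definition zeros (R : realType) (V : completeNormedModType R)
  (A : V -> set V) : set V := [set x | A x 0].

(* Resolvent (I + lam A)^{-1} x : the (unique, for maximal monotone A and
   lam > 0) y with x \in y + lam A y. *)
Definition resolvent (R : realType) (V : completeNormedModType R)
  (A : V -> set V) (lam : R) (x : V) : V :=
  xget 0 [set y | exists2 u, A y u & x = y + lam *: u].

From HB Require Import structures.
From mathcomp Require Import all_boot all_order all_algebra.
From mathcomp Require Import all_classical all_reals all_analysis.
From mathcomp Require Import ring lra.
Import Order.TTheory GRing.Theory Num.Theory.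
Import numFieldNormedType.Exports.
Local Open Scope classical_set_scope.
Local Open Scope ring_scope.

(** Along the flow, [d/dt E = <x', x - z> = <J - x, x - z>] with
  [J = (I + lam A)^{-1} x]; writing [x - J = lam u] with [u \in A J], this is
  [- |x - J|^2 - lam <u, J - z>], and [<u, J - z> >= 0] by monotonicity since
  [0 \in A z].  The real work is that the resolvent is well defined (Minty's
  theorem, applied to a shifted and rescaled copy of A).  For this we minimise
  [F_A(y, v) + (|y|^2 + |v|^2) / 2], where [F_A(y, v)] is the supremum of
  [<y, u> + <a, v> - <a, u>] over [u \in A a] (the Fitzpatrick function).
  Maximality gives [F_A(y, v) >= <y, v>], so the objective is at least
  [|y + v|^2 / 2]; it is strongly convex and lower semicontinuous, hence has a
  minimiser [(y0, v0)], and the first-order condition there forces [v0 = - y0]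
  and [- y0 \in A y0]. *)

Lemma cvg_sqr_norm {K : numFieldType} {V : normedModType K}
    {T} {F : set_system T} {FF : Filter F} (f : T -> V) l :
  f @ F --> l -> `|f s| ^+ 2 @[s --> F] --> `|l| ^+ 2.
Proof.
by move=> /cvg_norm fl; rewrite expr2; under eq_fun do rewrite expr2; exact: cvgM.
Qed.

Lemma cvg_sqr_dist_le {R : realFieldType} {V : completeNormedModType R}
    (u : nat -> V) (e : nat -> R) :
  e @ \oo --> 0 -> (forall n k, `|u n - u k| ^+ 2 <= e n + e k) ->
  cvg (u @ \oo).
Proof.
move=> e0 ue; apply: cauchy_cvg; apply: cauchy_exP => eps eps0.
have [N _ eN] : \forall n \near \oo, e n < eps ^+ 2 / 2.
  by apply: (cvgr_lt _ e0); rewrite divr_gt0 ?exprn_gt0.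
exists (u N); exists N => // n /= Nn; rewrite -ball_normE /ball_ /=.
rewrite -(ltr_pXn2r (_ : 0 < 2)%N) ?nnegrE ?(ltW eps0) //.
have := ue N n; have := eN N (leqnn N); have := eN n Nn; lra.
Qed.

Lemma ler_of_forall_1Bt (R : realFieldType) (K X : R) :
  (forall t, 0 < t <= 1 -> (1 - t) * K <= X) -> K <= X.
Proof.
move=> KX; have /KX : 0 < (1 : R) <= 1 by rewrite ltr01 lexx.
rewrite subrr mul0r => X_ge0.
apply/ler_addgt0Pr => e e_gt0; have [K_le0|K_gt0] := leP K 0; first lra.
pose t := Num.min 1 (e / K).
have t_gt0 : 0 < t by rewrite lt_min ltr01 divr_gt0.
have tK_le : t * K <= e by rewrite -ler_pdivlMr // ge_min lexx orbT.
have /KX : 0 < t <= 1 by rewrite t_gt0 ge_min lexx.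
lra.
Qed.

Section InnerProduct.
Context {R : realType} {V : completeNormedModType R} {ip : V -> V -> R}.
Hypothesis ipP : is_inner_product ip.

Lemma ipC x y : ip x y = ip y x. Proof. by case: ipP. Qed.

Lemma ipnn x : ip x x = `|x| ^+ 2. Proof. by case: ipP. Qed.

Lemma ip0l y : ip 0 y = 0.
Proof.
case: ipP => _ ipl _; apply/eqP; have := ipl 1 0 0 y.
by rewrite scale1r addr0 mul1r => /eqP; rewrite -subr_eq subrr eq_sym.
Qed.

Lemma ipDl x y z : ip (x + y) z = ip x z + ip y z.
Proof. by case: ipP => _ ipl _; rewrite -[x in LHS]scale1r ipl mul1r. Qed.

Lemma ipZl a x z : ip (a *: x) z = a * ip x z.
Proof. by case: ipP => _ ipl _; rewrite -[_ *: _]addr0 ipl ip0l addr0. Qed.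

Lemma ipNl x y : ip (- x) y = - ip x y.
Proof. by rewrite -scaleN1r ipZl mulN1r. Qed.

Lemma ipBl x y z : ip (x - y) z = ip x z - ip y z.
Proof. by rewrite ipDl ipNl. Qed.

Lemma ipDr x y z : ip x (y + z) = ip x y + ip x z.
Proof. by rewrite ipC ipDl !(ipC x). Qed.

Lemma ipZr a x z : ip x (a *: z) = a * ip x z.
Proof. by rewrite ipC ipZl ipC. Qed.

Lemma ipNr x y : ip x (- y) = - ip x y.
Proof. by rewrite ipC ipNl ipC. Qed.

Lemma ipBr x y z : ip x (y - z) = ip x y - ip x z.
Proof. by rewrite ipDr ipNr. Qed.

Lemma ipBB a b c d : ip (a - b) (c - d) = ip a c - ip a d - ip b c + ip b d.
Proof. by rewrite ipBl !ipBr; ring. Qed.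

Lemma normD2 x y : `|x + y| ^+ 2 = `|x| ^+ 2 + 2 * ip x y + `|y| ^+ 2.
Proof. by rewrite -!ipnn ipDl !ipDr (ipC y x); ring. Qed.

Lemma normB2 x y : `|x - y| ^+ 2 = `|x| ^+ 2 - 2 * ip x y + `|y| ^+ 2.
Proof. by rewrite -!ipnn ipBl !ipBr (ipC y x); ring. Qed.

Lemma ip_polar x y : ip x y = (`|x + y| ^+ 2 - `|x - y| ^+ 2) / 4.
Proof. by rewrite normD2 normB2; field. Qed.

Lemma norm_convex2 (t : R) (x y : V) :
  `|(1 - t) *: x + t *: y| ^+ 2
    = (1 - t) * `|x| ^+ 2 + t * `|y| ^+ 2 - t * (1 - t) * `|x - y| ^+ 2.
Proof.
rewrite normD2 normB2 ipZl ipZr !normrZ !exprMn !real_normK ?num_real //; ring.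
Qed.

Lemma cvg_ipl {T} {F : set_system T} {FF : Filter F} (f : T -> V) l y :
  f @ F --> l -> ip (f s) y @[s --> F] --> ip l y.
Proof.
move=> fl; rewrite ip_polar; under eq_fun do rewrite ip_polar.
apply: cvgMl; apply: cvgB; apply: cvg_sqr_norm.
  exact: (cvgD fl (cvg_cst y)).
exact: (cvgB fl (cvg_cst y)).
Qed.

Lemma cvg_ipr {T} {F : set_system T} {FF : Filter F} (f : T -> V) l y :
  f @ F --> l -> ip y (f s) @[s --> F] --> ip y l.
Proof. by move=> fl; rewrite ipC; under eq_fun do rewrite ipC; exact: cvg_ipl. Qed.

Lemma derive_half_sqr_dist (x : R -> V) (z : V) (t v : R) :
  derivable x t v ->
  'D_v (fun s => 2^-1 * `|x s - z| ^+ 2) t = ip ('D_v x t) (x t - z).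
Proof.
move=> dx; set u := x t - z.
pose q h := h^-1 *: (x (h *: v + t) - x t).
have qD : q h @[h --> 0^'] --> 'D_v x t := dx.
rewrite /derive; apply: cvg_lim => //.
have -> : ip ('D_v x t) u = ip ('D_v x t) u + 2^-1 * 0 * `|'D_v x t| ^+ 2.
  by rewrite mulr0 mul0r addr0.
have quotE : \forall h \near 0^',
    ip (q h) u + 2^-1 * h * `|q h| ^+ 2
    = h^-1 *: (((fun s => 2^-1 * `|x s - z| ^+ 2) \o shift t) (h *: v)
      - 2^-1 * `|x t - z| ^+ 2).
  near=> h; have h0 : h != 0 by near: h; exact: nbhs_dnbhs_neq.
  rewrite /q /= -/u.
  have -> : x (h *: v + t) - z = u + (x (h *: v + t) - x t).
    by rewrite /u [RHS]addrC addrA subrK.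
  rewrite normD2 ipZl normrZ exprMn real_normK ?num_real // (ipC u) /GRing.scale /=.
  by field.
apply: cvg_trans (near_eq_cvg quotE) _.
apply: cvgD; first exact: cvg_ipl.
apply: cvgM; last exact: cvg_sqr_norm.
by apply: cvgMr; exact: cvg_within.
Unshelve. all: by end_near.
Qed.

End InnerProduct.

Definition monotone_saturated {R : realType} {V : completeNormedModType R}
  (ip : V -> V -> R) (A : V -> set V) : Prop :=
  forall y v, (forall a u, A a u -> 0 <= ip (y - a) (v - u)) -> A y v.

Lemma maximal_monotone_saturated {R : realType} {V : completeNormedModType R}
  {ip : V -> V -> R} {A : V -> set V} :
  is_inner_product ip -> maximal_monotone ip A -> monotone_saturated ip A.
Proof.
move=> ipP [A_mono A_max] y v yv_mono.
pose B a := [set u | A a u \/ (a = y /\ u = v)].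
suff <- : B = A by right.
apply: A_max => [a b u w [Aau|[-> ->]] [Abw|[-> ->]] | a u Aau]; last by left.
- exact: A_mono.
- by rewrite -[a - y]opprB -[u - v]opprB (ipNl ipP) (ipNr ipP) opprK; exact: yv_mono.
- exact: yv_mono.
- by rewrite !subrr (ipnn ipP) normr0 expr0n.
Qed.

Section Fitzpatrick.
Context {R : realType} {V : completeNormedModType R} {ip : V -> V -> R}.
Hypothesis ipP : is_inner_product ip.
Variable A : V -> set V.
Hypotheses (A_mono : monotone_op ip A) (A_sat : monotone_saturated ip A).

(* [fitzpatrick_le y v c] encodes [F_A(y, v) <= c] without forming the sup. *)
Definition fitzpatrick_le (y v : V) (c : R) : Prop :=
  forall a u, A a u -> ip y u + ip a v - ip a u <= c.

Lemma fitzpatrick_le_trans {y v c c'} :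
  fitzpatrick_le y v c -> c <= c' -> fitzpatrick_le y v c'.
Proof. by move=> Fc cc' a u /Fc /le_trans; apply. Qed.

Lemma fitzpatrick_le_ip {y v c} : fitzpatrick_le y v c -> ip y v <= c.
Proof.
move=> Fc; rewrite leNgt; apply/negP => c_lt.
have Ayv : A y v.
  by apply: A_sat => a u /Fc; rewrite (ipBB ipP); lra.
by have := Fc y v Ayv; lra.
Qed.

Lemma fitzpatrick_le_graph {a u} : A a u -> fitzpatrick_le a u (ip a u).
Proof. by move=> Aau b w /(A_mono _ _ _ _ Aau); rewrite (ipBB ipP); lra. Qed.

Lemma fitzpatrick_le_convex {t y1 v1 c1 y2 v2 c2} : 0 <= t <= 1 ->
  fitzpatrick_le y1 v1 c1 -> fitzpatrick_le y2 v2 c2 ->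
  fitzpatrick_le ((1 - t) *: y1 + t *: y2) ((1 - t) *: v1 + t *: v2)
    ((1 - t) * c1 + t * c2).
Proof.
move=> /andP[t0 t1] F1 F2 a u Aau.
have t1' : 0 <= 1 - t by rewrite subr_ge0.
have := ler_wpM2l t1' (F1 a u Aau); have := ler_wpM2l t0 (F2 a u Aau).
rewrite (ipDl ipP) (ipDr ipP) !(ipZl ipP) !(ipZr ipP); lra.
Qed.

Lemma fitzpatrick_le_cvg {T} {F : set_system T} {FF : ProperFilter F}
    (ys vs : T -> V) (cs : T -> R) y v c :
  ys @ F --> y -> vs @ F --> v -> cs @ F --> c ->
  (forall s, fitzpatrick_le (ys s) (vs s) (cs s)) -> fitzpatrick_le y v c.
Proof.
move=> ysy vsv csc Fs a u Aau.
have phi_lim : ip (ys s) u + ip a (vs s) - ip a u @[s --> F]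
    --> ip y u + ip a v - ip a u.
  apply: cvgB; last exact: cvg_cst.
  by apply: cvgD; [exact: cvg_ipl | exact: cvg_ipr].
rewrite -subr_ge0; apply: (cvgr_to_ge (cvgB csc phi_lim)).
by apply: nearW => s; rewrite subr_ge0; exact: Fs.
Qed.

Lemma monotone_saturated_graph_neq0 : exists a u, A a u.
Proof.
have [//|graph0] := pselect (exists a u, A a u).
by exists 0, 0; apply: A_sat => a u Aau; exfalso; apply: graph0; exists a, u.
Qed.

Definition fitzpatrick_reg_le (y v : V) (c : R) : Prop :=
  fitzpatrick_le y v (c - (`|y| ^+ 2 + `|v| ^+ 2) / 2).

Lemma fitzpatrick_reg_le_ge {y v c} :
  fitzpatrick_reg_le y v c -> `|y + v| ^+ 2 / 2 <= c.
Proof. by move/fitzpatrick_le_ip; rewrite (normD2 ipP); lra. Qed.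

Lemma fitzpatrick_reg_le_graph {a u} :
  A a u -> fitzpatrick_reg_le a u (ip a u + (`|a| ^+ 2 + `|u| ^+ 2) / 2).
Proof. by rewrite /fitzpatrick_reg_le addrK; exact: fitzpatrick_le_graph. Qed.

Lemma fitzpatrick_reg_le_convex {t y1 v1 c1 y2 v2 c2} : 0 <= t <= 1 ->
  fitzpatrick_reg_le y1 v1 c1 -> fitzpatrick_reg_le y2 v2 c2 ->
  fitzpatrick_reg_le ((1 - t) *: y1 + t *: y2) ((1 - t) *: v1 + t *: v2)
    ((1 - t) * c1 + t * c2
     - t * (1 - t) * (`|y1 - y2| ^+ 2 + `|v1 - v2| ^+ 2) / 2).
Proof.
move=> t01 F1 F2; apply: fitzpatrick_le_trans (fitzpatrick_le_convex t01 F1 F2) _.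
by rewrite !(norm_convex2 ipP); lra.
Qed.

Lemma fitzpatrick_reg_min :
  exists y0 v0 m, fitzpatrick_reg_le y0 v0 m /\
    forall y v c, fitzpatrick_reg_le y v c -> m <= c.
Proof.
pose S := [set c | exists y v, fitzpatrick_reg_le y v c].
have [a0 [u0 /fitzpatrick_reg_le_graph Fa0]] := monotone_saturated_graph_neq0.
have S_inf : has_inf S.
  split; first by exists (ip a0 u0 + (`|a0| ^+ 2 + `|u0| ^+ 2) / 2), a0, u0.
  exists 0 => c [y [v /fitzpatrick_reg_le_ge]]; apply: le_trans.
  by rewrite divr_ge0 ?exprn_ge0.
have m_le y v c : fitzpatrick_reg_le y v c -> inf S <= c.
  by move=> Fc; apply: (ge_inf S_inf.2); exists y, v.
have near_inf n : exists yv : V * V,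
    fitzpatrick_reg_le yv.1 yv.2 (inf S + harmonic n).
  have [c [y [v Fc]] cS] := inf_adherent (harmonic_gt0 n) S_inf.
  by exists (y, v); apply: fitzpatrick_le_trans Fc _; rewrite lerD2r ltW.
have [f f_min] := choice near_inf.
pose ys n := (f n).1; pose vs n := (f n).2.
have dist_le n k : `|ys n - ys k| ^+ 2 + `|vs n - vs k| ^+ 2
    <= 4 * harmonic n + 4 * harmonic k.
  have half01 : 0 <= (2^-1 : R) <= 1 by rewrite invr_ge0 ler0n invf_le1 ?ler1n.
  have := m_le _ _ _ (fitzpatrick_reg_le_convex half01 (f_min n) (f_min k)).
  lra.
have h4 : 4 * harmonic n @[n --> \oo] --> (0 : R).
  by rewrite -(mulr0 4); apply: cvgMr; exact: cvg_harmonic.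
have ys_cvg : cvg (ys @ \oo).
  apply: (cvg_sqr_dist_le _ _ h4) => n k; have := dist_le n k.
  suff : 0 <= `|vs n - vs k| ^+ 2 by lra.
  exact: exprn_ge0.
have vs_cvg : cvg (vs @ \oo).
  apply: (cvg_sqr_dist_le _ _ h4) => n k; have := dist_le n k.
  suff : 0 <= `|ys n - ys k| ^+ 2 by lra.
  exact: exprn_ge0.
have c_lim : inf S + harmonic n - (`|ys n| ^+ 2 + `|vs n| ^+ 2) / 2 @[n --> \oo]
    --> inf S - (`|lim (ys @ \oo)| ^+ 2 + `|lim (vs @ \oo)| ^+ 2) / 2.
  apply: cvgB.
    by rewrite -[X in _ --> X]addr0; apply: cvgD; [exact: cvg_cst | exact: cvg_harmonic].
  by apply: cvgMl; apply: cvgD; exact: cvg_sqr_norm.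
exists (lim (ys @ \oo)), (lim (vs @ \oo)), (inf S).
by split=> //; exact: fitzpatrick_le_cvg ys_cvg vs_cvg c_lim f_min.
Qed.

Lemma fitzpatrick_reg_min_variational {y0 v0 m} :
  fitzpatrick_reg_le y0 v0 m ->
  (forall y v c, fitzpatrick_reg_le y v c -> m <= c) ->
  forall a u, A a u ->
    m + (`|y0| ^+ 2 + `|v0| ^+ 2) / 2 <= ip a u + ip y0 a + ip v0 u.
Proof.
move=> F0 m_le a u Aau.
have : (`|y0 - a| ^+ 2 + `|v0 - u| ^+ 2) / 2
    <= ip a u + (`|a| ^+ 2 + `|u| ^+ 2) / 2 - m.
  apply: ler_of_forall_1Bt => t /andP[t0 t1].
  have t01 : 0 <= t <= 1 by rewrite ltW.
  have := m_le _ _ _ (fitzpatrick_reg_le_convex t01 F0 (fitzpatrick_reg_le_graph Aau)).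
  by move=> h; rewrite -(ler_pM2l t0); lra.
by rewrite !(normB2 ipP); lra.
Qed.

Lemma monotone_saturated_antidiag : exists y, A y (- y).
Proof.
have [y0 [v0 [m [F0 m_le]]]] := fitzpatrick_reg_min.
have Fneg : fitzpatrick_le (- v0) (- y0) (- (m + (`|y0| ^+ 2 + `|v0| ^+ 2) / 2)).
  move=> a u /(fitzpatrick_reg_min_variational F0 m_le).
  by rewrite (ipNl ipP) (ipNr ipP) (ipC ipP a y0); lra.
have ip_le := fitzpatrick_le_ip Fneg.
rewrite (ipNl ipP) (ipNr ipP) opprK (ipC ipP v0) in ip_le.
have m_ge := fitzpatrick_reg_le_ge F0.
have sqE := normD2 ipP y0 v0.
have sq_ge0 := exprn_ge0 2 (normr_ge0 (y0 + v0)).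
have v0E : v0 = - y0.
  apply/eqP; rewrite -addr_eq0 addrC -normr_eq0 -sqrf_eq0.
  by rewrite eq_le sq_ge0 andbT; lra.
exists y0; rewrite -v0E; apply: A_sat => a u /F0.
by rewrite (ipBB ipP); lra.
Qed.

End Fitzpatrick.

Lemma resolventP {R : realType} {V : completeNormedModType R} {ip : V -> V -> R}
    {A : V -> set V} {lam : R} (x : V) :
  is_inner_product ip -> maximal_monotone ip A -> 0 < lam ->
  exists2 u, A (resolvent A lam x) u & x = resolvent A lam x + lam *: u.
Proof.
move=> ipP A_max lam0; have A_sat := maximal_monotone_saturated ipP A_max.
have lamV : lam^-1 * lam = 1 by rewrite mulVf ?gt_eqF.
(* [B y (- y)] says exactly that [x \in y + lam A y]. *)
pose B a := [set b | A a (lam^-1 *: (b + x))].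
have B_mono : monotone_op ip B.
  move=> a c b d Bab Bcd; have := A_max.1 _ _ _ _ Bab Bcd.
  rewrite -scalerBr opprD addrACA subrr addr0 (ipZr ipP).
  by rewrite pmulr_rge0 // invr_gt0.
have B_sat : monotone_saturated ip B.
  move=> y v yv_mono; apply: A_sat => a w Aaw.
  have Ba : B a (lam *: w - x) by rewrite /B /= subrK scalerA lamV scale1r.
  have := yv_mono _ _ Ba.
  have -> : v - (lam *: w - x) = lam *: (lam^-1 *: (v + x) - w).
    by rewrite scalerBr scalerA mulfV ?gt_eqF // scale1r opprB addrA.
  by rewrite (ipZr ipP) pmulr_rge0.
have [y Byy] := monotone_saturated_antidiag ipP _ B_mono B_sat.
suff : [set y | exists2 u, A y u & x = y + lam *: u] (resolvent A lam x) by [].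
apply: xgetPex; exists y, (lam^-1 *: (- y + x)) => //.
by rewrite scalerA mulfV ?gt_eqF // scale1r addNKr.
Qed.

Theorem lemma3p1 (R : realType) (V : completeNormedModType R)
  (ip : V -> V -> R) (A : V -> set V) (theta : R) (p : nat)
  (x : R -> V) (lam : R -> R) (z : V) :
  is_inner_product ip ->
  maximal_monotone ip A ->
  zeros A !=set0 ->
  0 < theta ->
  (1 <= p)%N ->
  (forall t, 0 <= t -> 0 < lam t) ->
  (forall t, 0 < t -> derivable x t 1) ->
  (forall t, 0 < t ->
     'D_1 x t + x t - resolvent A (lam t) (x t) = 0) ->
  (forall t, 0 <= t ->
     lam t * `|resolvent A (lam t) (x t) - x t| ^+ p.-1 = theta) ->
  ~ zeros A (x 0) ->
  zeros A z ->
  forall t, 0 < t ->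
    'D_1 (fun s => 2^-1 * `|x s - z| ^+ 2) t
      <= - `|x t - resolvent A (lam t) (x t)| ^+ 2.
Proof.
move=> ipP A_max _ _ _ lam_gt0 x_der x_ode _ _ Az t t_gt0.
rewrite (derive_half_sqr_dist ipP _ _ _ _ (x_der t t_gt0)).
have lamt_gt0 := lam_gt0 t (ltW t_gt0).
have [u Au xE] := resolventP (x t) ipP A_max lamt_gt0.
set J := resolvent A (lam t) (x t) in Au xE *.
have -> : 'D_1 x t = - (x t - J) by apply/eqP; rewrite opprB -subr_eq0 opprB addrA x_ode.
have -> : x t - J = lam t *: u by rewrite {1}xE addrC addKr.
have := A_max.1 _ _ _ _ Au Az; rewrite subr0 => mono.
have -> : x t - z = lam t *: u + (J - z) by rewrite xE [J + _]addrC addrA.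
rewrite (ipNl ipP) (ipDr ipP) (ipnn ipP) (ipZl ipP) (ipC ipP u).
have : 0 <= lam t * ip (J - z) u by rewrite mulr_ge0 // ltW.
lra.
Qed.
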